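(* Let $M$ be a right $R$-module and $S={\rm End}_R(M)$. (1) The following are equivalent: (i) $M$ is a strongly self-Rickart right $R$-module; (ii) $S$ is a strongly self-Rickart right $S$-module and for every $f\in S$, ${\rm Ker}(f)$ is $M$-cyclic; (iii) $S$ is a strongly self-Rickart right $S$-module and for every $f\in S$, ${\rm Ker}(f)\in {\rm Stat}({\rm Hom}_R(M,-))$; (iv) $S$ is a strongly self-Rickart right $S$-module and for every $f\in S$, the inclusion ${\rm ker}(f):{\rm Ker}(f)\to M$ is a locally split monomorphism; (v) $S$ is a strongly self-Rickart right $S$-module and $M$ is $k$-quasi-retractable. (2) The following are equivalent: (i) $M$ is a dual strongly self-Rickart right $R$-module; (ii) $S$ is a strongly self-Rickart left $S$-module and for every $f\in S$, ${\rm Coker}(f)$ is $M$-cocyclic; (iii) $S$ is a strongly self-Rickart left $S$-module and for every $f\in S$, ${\rm Coker}(f)\in {\rm Refl}({\rm Hom}_R(-,M))$; (iv) $S$ is a strongly self-Rickart left $S$-module and for every $f\in S$, the projection ${\rm coker}(f):M\to {\rm Coker}(f)$ is a locally split epimorphism; (v) $S$ is a strongly self-Rickart left $S$-module and $M$ is $c$-quasi-coretractable.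
   Context: A module $X$ is strongly self-Rickart if for every endomorphism $g$ of $X$, ${\rm Ker}(g)$ is a direct summand of $X$ which is fully invariant ($h({\rm Ker}(g))\subseteq{\rm Ker}(g)$ for all endomorphisms $h$); $X$ is dual strongly self-Rickart if for every endomorphism $g$, ${\rm Im}(g)$ is a fully invariant direct summand of $X$. A module $Y$ is $M$-cyclic if there is an epimorphism $M\to Y$; $Y$ is $M$-cocyclic if there is a monomorphism $Y\to M$. ${\rm Stat}({\rm Hom}_R(M,-))$ is the class of right $R$-modules $X$ for which the counit (evaluation) map ${\rm Hom}_R(M,X)\otimes_S M\to X$ of the adjunction $(-\otimes_S M,{\rm Hom}_R(M,-))$ is an isomorphism. ${\rm Refl}({\rm Hom}_R(-,M))$ is the class of right $R$-modules $X$ for which the natural evaluation map $X\to {\rm Hom}_S({\rm Hom}_R(X,M),M)$ is an isomorphism (for the pair of contravariant functors ${\rm Hom}_R(-,M)$ from right $R$-modules to left $S$-modules and ${\rm Hom}_S(-,M)$ back). A monomorphism $u:A\to B$ of right $R$-modules is locally split if for every $a\in A$ there is an $R$-homomorphism $h:B\to A$ with $h(u(a))=a$; an epimorphism $v:B\to C$ is locally split if for every $c\in C$ there is an $R$-homomorphism $h:C\to B$ with $v(h(c))=c$. $M$ is $k$-quasi-retractable if ${\rm Hom}_R(M,{\rm Ker}(f))\neq 0$ for every $f\in {\rm End}_R(M)$ with ${\rm Ker}(f)\neq 0$; $M$ is $c$-quasi-coretractable if ${\rm Hom}_R({\rm Coker}(f),M)\neq 0$ for every $f\in{\rm End}_R(M)$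 with ${\rm Coker}(f)\neq 0$. *)

From mathcomp Require Import all_boot all_algebra.
Import GRing.Theory.

Set Implicit Arguments.
Unset Strict Implicit.
Unset Printing Implicit Defensive.

Local Open Scope ring_scope.

(* A lightweight, explicit notion of "module data", used to speak uniformly  *)
(* about the three modules of the statement: M_R, S_S and _S S, where        *)
(* S = End_R(M) is realised as the set of R-endomorphisms of M (a subset of  *)
(* the function type M -> M, equality of endomorphisms being equality of     *)
(* functions).                                                               *)
(*   mcar  : ambient carrier type, mset : the elements of the module,        *)
(*   mscal : ambient type of scalars, msc : the scalars (elements of ring),  *)
Record modData := ModData {
  mcar : Type;
  mset : mcar -> Prop;
  mzero : mcar;
  madd : mcar -> mcar -> mcar;
  mopp : mcar -> mcar;
  mscal : Type;
  msc : mscal -> Prop;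
  mact : mcar -> mscal -> mcar
}.

Section ModuleNotions.
Variable D : modData.

Definition is_endo (g : mcar D -> mcar D) : Prop :=
  [/\ forall x, mset x -> mset (g x),
      forall x y, mset x -> mset y -> g (madd x y) = madd (g x) (g y) &
      forall x r, mset x -> msc r -> g (mact x r) = mact (g x) r].

Definition is_submod (P : mcar D -> Prop) : Prop :=
  [/\ forall x, P x -> mset x,
      P (mzero D),
      forall x y, P x -> P y -> P (madd x y),
      forall x, P x -> P (mopp x) &
      forall x r, P x -> msc r -> P (mact x r)].

Definition Ker (g : mcar D -> mcar D) : mcar D -> Prop :=
  fun x => mset x /\ g x = mzero D.

Definition direct_summand (P : mcar D -> Prop) : Prop :=
  exists Q, [/\ is_submod Q,
     forall x, P x -> Q x -> x = mzero D &
     forall x, mset x -> exists y z, [/\ P y, Q z & x = madd y z]].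

Definition fully_invariant (P : mcar D -> Prop) : Prop :=
  forall h, is_endo h -> forall x, P x -> P (h x).

Definition strongly_self_Rickart : Prop :=
  forall g, is_endo g ->
    direct_summand (Ker g) /\ fully_invariant (Ker g).

Definition Im (g : mcar D -> mcar D) : mcar D -> Prop :=
  fun y => exists x, mset x /\ g x = y.

Definition dual_strongly_self_Rickart : Prop :=
  forall g, is_endo g ->
    direct_summand (Im g) /\ fully_invariant (Im g).

End ModuleNotions.

Section EndoRing.
Variables (R : pzRingType) (M : lmodType R^c).

(* M as a right R-module: m . r := r *: m in the converse ring R^c *)
Definition modM : modData :=
  @ModData M (fun _ => True) 0 +%R (fun x => - x) R (fun _ => True)
           (fun m r => (r : R^c) *: m).

Definition inS (f : M -> M) : Prop := is_endo (D := modM) f.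

Definition zeroS : M -> M := fun _ => 0.
Definition addS (f g : M -> M) : M -> M := fun x => f x + g x.
Definition oppS (f : M -> M) : M -> M := fun x => - f x.

Definition modS_right : modData :=
  @ModData (M -> M) inS zeroS addS oppS (M -> M) inS (fun f t => f \o t).

Definition modS_left : modData :=
  @ModData (M -> M) inS zeroS addS oppS (M -> M) inS (fun f s => s \o f).

(* Ker(f) is M-cyclic: there is an epimorphism M -> Ker(f), i.e. an
   R-endomorphism of M whose image is exactly Ker(f). *)
Definition Ker_M_cyclic (f : M -> M) : Prop :=
  exists p, inS p /\ forall y, f y = 0 <-> exists x, p x = y.

(* Coker(f) = M/Im(f) is M-cocyclic: there is a monomorphism Coker(f) -> M,
   i.e. an R-endomorphism q of M vanishing on Im(f) whose kernel is Im(f). *)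
Definition Coker_M_cocyclic (f : M -> M) : Prop :=
  exists q, [/\ inS q, forall y, q (f y) = 0 &
                 forall x, q x = 0 -> exists y, x = f y].

(* Hom_R(M, Ker f), realised as R-endomorphisms of M with values in Ker f *)
Definition HomM_Ker (f : M -> M) (g : M -> M) : Prop :=
  inS g /\ forall x, f (g x) = 0.

(* Ker(f) in Stat(Hom_R(M,-)): the evaluation map
   Hom_R(M,Ker f) (x)_S M -> Ker f is an isomorphism, i.e. (Ker f, ev) is a
   tensor product of the right S-module Hom_R(M,Ker f) and the left S-module
   M over S (universal property w.r.t. S-balanced biadditive maps). *)
Definition Ker_in_Stat (f : M -> M) : Prop :=
  forall (T : zmodType) (beta : (M -> M) -> M -> T),
    (forall g1 g2 m, HomM_Ker f g1 -> HomM_Ker f g2 ->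
        beta (addS g1 g2) m = beta g1 m + beta g2 m) ->
    (forall g m1 m2, HomM_Ker f g -> beta g (m1 + m2) = beta g m1 + beta g m2) ->
    (forall g s m, HomM_Ker f g -> inS s -> beta (g \o s) m = beta g (s m)) ->
    exists phi : M -> T,
      [/\ forall x y, f x = 0 -> f y = 0 -> phi (x + y) = phi x + phi y,
          forall g m, HomM_Ker f g -> phi (g m) = beta g m &
          forall psi : M -> T,
            (forall x y, f x = 0 -> f y = 0 -> psi (x + y) = psi x + psi y) ->
            (forall g m, HomM_Ker f g -> psi (g m) = beta g m) ->
            forall x, f x = 0 -> psi x = phi x].

(* Hom_R(Coker f, M), realised as R-endomorphisms of M vanishing on Im f *)
Definition HomCoker_M (f : M -> M) (h : M -> M) : Prop :=
  inS h /\ forall y, h (f y) = 0.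

(* Coker(f) in Refl(Hom_R(-,M)): the evaluation map
   Coker f -> Hom_S(Hom_R(Coker f, M), M) is bijective. *)
Definition Coker_in_Refl (f : M -> M) : Prop :=
  (* injectivity *)
  (forall m, (forall h, HomCoker_M f h -> h m = 0) -> exists y, m = f y) /\
  (* surjectivity: every left S-linear phi is evaluation at some class [m] *)
  (forall phi : (M -> M) -> M,
     (forall h1 h2, HomCoker_M f h1 -> HomCoker_M f h2 ->
        phi (addS h1 h2) = phi h1 + phi h2) ->
     (forall s h, inS s -> HomCoker_M f h -> phi (s \o h) = s (phi h)) ->
     exists m, forall h, HomCoker_M f h -> phi h = h m).

Definition ker_locally_split (f : M -> M) : Prop :=
  forall a, f a = 0 -> exists h, HomM_Ker f h /\ h a = a.

Definition coker_locally_split (f : M -> M) : Prop :=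
  forall m, exists h, HomCoker_M f h /\ exists y, h m - m = f y.

Definition k_quasi_retractable : Prop :=
  forall f, inS f -> (exists x, f x = 0 /\ x <> 0) ->
    exists h, HomM_Ker f h /\ exists x, h x <> 0.

Definition c_quasi_coretractable : Prop :=
  forall f, inS f -> (exists x, forall y, f y <> x) ->
    exists h, HomCoker_M f h /\ exists x, h x <> 0.

End EndoRing.

Arguments inS {R} M f.
Arguments Ker_M_cyclic {R} M f.
Arguments Coker_M_cocyclic {R} M f.
Arguments Ker_in_Stat {R} M f.
Arguments Coker_in_Refl {R} M f.
Arguments ker_locally_split {R} M f.
Arguments coker_locally_split {R} M f.
Arguments k_quasi_retractable {R} M.
Arguments c_quasi_coretractable {R} M.
Arguments modM {R} M.
Arguments modS_right {R} M.
Arguments modS_left {R} M.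

(* For f in S = End_R(M), a decomposition M = Ker f (+) Q amounts to an
   idempotent e in S with eM = Ker f, and M = Im f (+) Q to an idempotent q
   with Ker q = Im f.  On the ring side, S_S (resp. _S S) is strongly
   self-Rickart exactly when every right annihilator r(f) (resp. left
   annihilator l(f)) is eS (resp. Se) for an idempotent e, and S has the
   insertion-of-factors property ab = 0 => aub = 0.  Given r(f) = eS, what
   is missing for M is Ker f = eM, i.e. that Ker f is generated by the maps
   M -> Ker f; dually, that Coker f is cogenerated by M.  Conditions
   (ii)-(iv) give this at once (for (iii), uniqueness in the universal
   property of Hom(M, Ker f) (x)_S M forces e x = x on Ker f).  For (v),
   insertion of factors makes e central; if f x = 0 but e x <> x, then
   x - e x <> 0 lies in Ker (f + e), while every h with (f + e) h = 0 has
   e h = 0 = f h, so h lies in r(f) = eS and h = 0.  The cokernel side is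
   dual. *)

From mathcomp Require Import all_boot all_algebra.
From Stdlib Require Import Classical ClassicalEpsilon FunctionalExtensionality PropExtensionality.

Set Implicit Arguments.
Unset Strict Implicit.
Unset Printing Implicit Defensive.
Import GRing.Theory.
Local Open Scope ring_scope.

Section EndomorphismRing.
Variables (R : pzRingType) (M : lmodType R^c).
Implicit Types (a b c e f g h p q s t u : M -> M) (x y z m : M).

Lemma endoD f x y : inS M f -> f (x + y) = f x + f y.
Proof. by case=> _ + _; apply. Qed.

Lemma endoZ f (r : R) x : inS M f -> f ((r : R^c) *: x) = (r : R^c) *: f x.
Proof. by case=> _ _; apply. Qed.

Lemma inS_linear f : (forall x y, f (x + y) = f x + f y) ->
  (forall (r : R) x, f ((r : R^c) *: x) = (r : R^c) *: f x) -> inS M f.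
Proof. by move=> fD fZ; split=> // x y _ _; [apply: fD | apply: fZ]. Qed.

Lemma endo0 f : inS M f -> f 0 = 0.
Proof. by move=> Hf; apply: (addrI (f 0)); rewrite -endoD // !addr0. Qed.

Lemma endoN f x : inS M f -> f (- x) = - f x.
Proof. by move=> Hf; apply/eqP; rewrite -addr_eq0 -endoD // addrC subrr endo0. Qed.

Lemma endoB f x y : inS M f -> f (x - y) = f x - f y.
Proof. by move=> Hf; rewrite endoD // endoN. Qed.

Lemma inS_id : inS M id.
Proof. exact: inS_linear. Qed.

Lemma inS_zero : inS M (fun _ => 0).
Proof. by apply: inS_linear => [x y|r x]; rewrite ?addr0 ?scaler0. Qed.

Lemma inS_comp f g : inS M f -> inS M g -> inS M (f \o g).
Proof.
move=> Hf Hg; apply: inS_linear => [x y|r x] /=.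
  by rewrite (endoD _ _ Hg) (endoD _ _ Hf).
by rewrite (endoZ _ _ Hg) (endoZ _ _ Hf).
Qed.

Lemma inS_add f g : inS M f -> inS M g -> inS M (fun x => f x + g x).
Proof.
move=> Hf Hg; apply: inS_linear => [x y|r x].
  by rewrite (endoD _ _ Hf) (endoD _ _ Hg) addrACA.
by rewrite (endoZ _ _ Hf) (endoZ _ _ Hg) scalerDr.
Qed.

Lemma inS_opp f : inS M f -> inS M (fun x => - f x).
Proof.
move=> Hf; apply: inS_linear => [x y|r x]; first by rewrite (endoD _ _ Hf) opprD.
by rewrite (endoZ _ _ Hf) scalerN.
Qed.

Lemma inS_sub f g : inS M f -> inS M g -> inS M (fun x => f x - g x).
Proof. by move=> Hf Hg; apply: inS_add => //; apply: inS_opp. Qed.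

Lemma funeq0P (F : M -> M) : F = @zeroS R M <-> forall x, F x = 0.
Proof. by split=> [-> | F0] //; apply: functional_extensionality. Qed.

Lemma Ker_submod f : inS M f -> is_submod (D:=modM M) (Ker (D:=modM M) f).
Proof.
move=> Hf; split=> //= [|x y [_ fx] [_ fy]|x [_ fx]|x r [_ fx] _]; split=> //.
- exact: endo0.
- by rewrite endoD // fx fy addr0.
- by rewrite endoN // fx oppr0.
- by rewrite endoZ // fx scaler0.
Qed.

Lemma Im_submod f : inS M f -> is_submod (D:=modM M) (Im (D:=modM M) f).
Proof.
move=> Hf; split=> //= [|_ _ [x [_ <-]] [y [_ <-]]|_ [x [_ <-]]|_ r [x [_ <-]] _].
- by exists 0; rewrite endo0.
- by exists (x + y); rewrite endoD.
- by exists (- x); rewrite endoN.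
- by exists ((r : R^c) *: x); rewrite endoZ.
Qed.

Lemma summand_projection P :
  is_submod (D:=modM M) P -> direct_summand (D:=modM M) P ->
  exists p, [/\ inS M p, forall x, P (p x) & forall x, P x -> p x = x].
Proof.
move=> [_ _ PD PN PZ] [Q [[_ Q0 QD QN QZ] PQ dec]].
have [p Hp] : exists p, forall x, P (p x) /\ Q (x - p x).
  apply: (choice (fun x y => P y /\ Q (x - y))) => x.
  have [y [z [Py Qz ->]]] := dec x I.
  by exists y; rewrite addrC addKr.
have p_uniq x y : P y -> Q (x - y) -> p x = y.
  move=> Py Qy; have [Ppx Qpx] := Hp x.
  apply/eqP; rewrite -subr_eq0; apply/eqP/PQ; first by apply: PD => //; apply: PN.
  have -> : p x - y = (x - y) - (x - p x) by rewrite opprB [RHS]addrC addrA subrK.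
  by apply: QD => //; apply: QN.
exists p; split=> [||x Px]; last by apply: p_uniq; rewrite ?subrr.
- apply: inS_linear => [x y|r x]; apply: p_uniq.
  + by apply: PD; [case: (Hp x) | case: (Hp y)].
  + by rewrite opprD addrACA; apply: QD; [case: (Hp x) | case: (Hp y)].
  + by apply: PZ => //; case: (Hp x).
  + by rewrite -scalerBr; apply: QZ => //; case: (Hp x).
- by move=> x; case: (Hp x).
Qed.

Definition ker_idempotent f e :=
  [/\ inS M e, forall x, f (e x) = 0 & forall x, f x = 0 -> e x = x].

Definition ker_invariant f := forall h x, inS M h -> f x = 0 -> f (h x) = 0.

Definition coker_idempotent f q :=
  [/\ inS M q, forall x, q (q x) = q x, forall y, q (f y) = 0
    & forall x, q x = 0 -> exists y, x = f y].

Definition im_invariant f := forall h y, inS M h -> exists y', h (f y) = f y'.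

Lemma ssR_modMP : strongly_self_Rickart (modM M) <->
  forall f, inS M f -> (exists e, ker_idempotent f e) /\ ker_invariant f.
Proof.
split=> H f Hf.
  have [sum FI] := H f Hf.
  have [e [He fe efix]] := summand_projection (Ker_submod Hf) sum.
  split; first by exists e; split=> // x; [case: (fe x) | move=> fx; apply: efix].
  by move=> h x Hh fx; case: (FI h Hh x (conj I fx)).
have [[e [He fe efix]] FI] := H f Hf.
split; last by move=> h Hh x [_ fx]; split; last exact: FI.
exists (fun x => e x = 0); split.
- split=> //= [|x y ex ey|x ex|x r ex _].
  + exact: endo0.
  + by rewrite endoD // ex ey addr0.
  + by rewrite endoN // ex oppr0.
  + by rewrite endoZ // ex scaler0.
- by move=> x [_ fx] ex; rewrite -(efix x fx).
- move=> x _; exists (e x), (x - e x); split=> /=.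
  + exact: conj I (fe x).
  + by rewrite endoB // (efix _ (fe x)) subrr.
  + by rewrite addrC subrK.
Qed.

Lemma dssR_modMP : dual_strongly_self_Rickart (modM M) <->
  forall f, inS M f -> (exists q, coker_idempotent f q) /\ im_invariant f.
Proof.
split=> H f Hf.
  have [sum FI] := H f Hf.
  have [p [Hp Pp pfix]] := summand_projection (Im_submod Hf) sum.
  have pf y : p (f y) = f y by apply: pfix; exists y.
  split=> [|h y Hh].
    exists (fun x => x - p x); split=> [||y|x].
    - exact: inS_sub inS_id Hp.
    - by move=> x; rewrite endoB // (pfix _ (Pp x)) subrr subr0.
    - by rewrite pf subrr.
    - move=> /eqP; rewrite subr_eq0 => /eqP ->.
      by have [y [_ <-]] := Pp x; exists y.
  by have [y' [_ <-]] := FI h Hh (f y) (ex_intro _ y (conj I erefl)); exists y'.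
have [[q [Hq qq qf qker]] FI] := H f Hf.
split; last by move=> h Hh _ [y [_ <-]]; have [y' ->] := FI h y Hh; exists y'.
exists (fun x => q x = x); split.
- split=> //= [|x y qx qy|x qx|x r qx _].
  + exact: endo0.
  + by rewrite endoD // qx qy.
  + by rewrite endoN // qx.
  + by rewrite endoZ // qx.
- by move=> _ [y [_ <-]] qx; rewrite -qx qf.
- move=> x _; exists (x - q x), (q x); split=> //=; last by rewrite subrK.
  have [y ->] : exists y, x - q x = f y by apply: qker; rewrite endoB // qq subrr.
  by exists y.
Qed.

Definition rann_idempotent s e :=
  [/\ inS M e, forall x, s (e x) = 0
    & forall t, inS M t -> (forall x, s (t x) = 0) -> forall x, e (t x) = t x].

Definition lann_idempotent c e :=
  [/\ inS M e, forall x, e (c x) = 0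
    & forall t, inS M t -> (forall x, t (c x) = 0) -> forall x, t (e x) = t x].

Definition insertion_of_factors := forall a b u, inS M a -> inS M b -> inS M u ->
  (forall x, a (b x) = 0) -> forall x, a (u (b x)) = 0.

Lemma is_endo_lmul s : inS M s -> is_endo (D:=modS_right M) (fun t => s \o t).
Proof.
move=> Hs; split=> //= [t Ht|t1 t2 _ _]; first exact: inS_comp.
by apply: functional_extensionality => x; rewrite /addS /= endoD.
Qed.

Lemma modS_right_endoE G t : is_endo (D:=modS_right M) G -> inS M t -> G t = G id \o t.
Proof. by case=> _ _ GZ Ht; apply: (GZ id t inS_id Ht). Qed.

Lemma modS_right_KerE G : is_endo (D:=modS_right M) G ->
  Ker (D:=modS_right M) G = Ker (D:=modS_right M) (fun t => G id \o t).
Proof.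
move=> HG; apply: functional_extensionality => t; apply: propositional_extensionality.
by split=> -[Ht Gt]; split=> //; rewrite -?Gt (modS_right_endoE HG Ht).
Qed.

Lemma rann_summandP s : inS M s ->
  direct_summand (D:=modS_right M) (Ker (D:=modS_right M) (fun t => s \o t)) <->
  exists e, rann_idempotent s e.
Proof.
move=> Hs; split=> [[Q [[QS _ _ _ QZ] PQ dec]] | [e [He se efix]]].
  have [e [z [[He se0] Qz id_ez]]] := dec id inS_id.
  have se x : s (e x) = 0 := congr1 (fun F => F x) se0.
  have ez x : x = e x + z x := congr1 (fun F => F x) id_ez.
  exists e; split=> // t Ht st x.
  have zt0 : z \o t = @zeroS R M.
    apply: PQ (QZ z t Qz Ht); split; first exact: inS_comp (QS _ Qz) Ht.
    apply/funeq0P => y /=.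
    have zE : z (t y) = t y - e (t y) by rewrite {2}[t y]ez addrC addKr.
    by rewrite zE endoB // st se subrr.
  have ztx : z (t x) = 0 := congr1 (fun F => F x) zt0.
  by rewrite {2}[t x]ez ztx addr0.
have ee x : e (e x) = e x := efix e He se x.
exists (fun t => inS M t /\ forall x, e (t x) = 0); split.
- split=> [t [] //||t1 t2 [H1 e1] [H2 e2]|t [Ht et]|t r [Ht et] Hr].
  + by split; [exact: inS_zero | move=> x; apply: endo0].
  + by split=> [|x]; [exact: inS_add | rewrite endoD // e1 e2 addr0].
  + by split=> [|x]; [exact: inS_opp | rewrite endoN // et oppr0].
  + by split=> [|x]; [exact: inS_comp | apply: et].
- move=> t [Ht /funeq0P st] [_ et]; apply/funeq0P => x.
  by rewrite -(efix t Ht st x) et.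
- move=> t Ht; exists (e \o t), (fun x => t x - e (t x)); split.
  + by split; [exact: inS_comp | apply/funeq0P => x /=; apply: se].
  + by split=> [|x]; [exact: inS_sub Ht (inS_comp He Ht) | rewrite endoB // ee subrr].
  + by apply: functional_extensionality => x; rewrite /= /addS addrC subrK.
Qed.

Lemma rann_fully_invariantP s :
  fully_invariant (D:=modS_right M) (Ker (D:=modS_right M) (fun t => s \o t)) <->
  forall t u, inS M t -> inS M u -> (forall x, s (t x) = 0) -> forall x, s (u (t x)) = 0.
Proof.
split=> [FI t u Ht Hu st | IF h Hh t [Ht /funeq0P st]].
  by have [_ /funeq0P] := FI _ (is_endo_lmul Hu) t (conj Ht (proj2 (funeq0P _) st)).
have Hhid : inS M (h id) by case: Hh => hS _ _; apply: hS inS_id.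
rewrite (modS_right_endoE Hh Ht); split; first exact: inS_comp.
by apply/funeq0P => x; exact: IF t (h id) Ht Hhid st x.
Qed.

Lemma ssR_modS_rightP : strongly_self_Rickart (modS_right M) <->
  (forall s, inS M s -> exists e, rann_idempotent s e) /\ insertion_of_factors.
Proof.
split=> [H | [Hann IF] G HG].
  split=> [s Hs | a b u Ha Hb Hu].
    by apply/(rann_summandP Hs); case: (H _ (is_endo_lmul Hs)).
  by have [_ /rann_fully_invariantP] := H _ (is_endo_lmul Ha); apply.
have HGid : inS M (G id) by case: HG => GS _ _; apply: GS inS_id.
rewrite (modS_right_KerE HG); split; first exact/(rann_summandP HGid)/(Hann _ HGid).
by apply/rann_fully_invariantP => t u Ht Hu; exact: IF _ _ _ HGid Ht Hu.
Qed.

Lemma is_endo_rmul u : inS M u -> is_endo (D:=modS_left M) (fun t => t \o u).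
Proof. by move=> Hu; split=> //= t Ht; apply: inS_comp. Qed.

Lemma modS_left_endoE G t : is_endo (D:=modS_left M) G -> inS M t -> G t = t \o G id.
Proof. by case=> _ _ GZ Ht; apply: (GZ id t inS_id Ht). Qed.

Lemma modS_left_KerE G : is_endo (D:=modS_left M) G ->
  Ker (D:=modS_left M) G = Ker (D:=modS_left M) (fun t => t \o G id).
Proof.
move=> HG; apply: functional_extensionality => t; apply: propositional_extensionality.
by split=> -[Ht Gt]; split=> //; rewrite -?Gt (modS_left_endoE HG Ht).
Qed.

Lemma lann_summandP c :
  direct_summand (D:=modS_left M) (Ker (D:=modS_left M) (fun t => t \o c)) <->
  exists e, lann_idempotent c e.
Proof.
split=> [[Q [[QS _ _ _ QZ] PQ dec]] | [e [He ec efix]]].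
  have [e [z [[He ec0] Qz id_ez]]] := dec id inS_id.
  have ec x : e (c x) = 0 := congr1 (fun F => F x) ec0.
  have ez x : x = e x + z x := congr1 (fun F => F x) id_ez.
  exists e; split=> // t Ht tc x.
  have tz0 : t \o z = @zeroS R M.
    apply: PQ (QZ z t Qz Ht); split; first exact: inS_comp Ht (QS _ Qz).
    apply/funeq0P => y /=.
    have zc : z (c y) = c y by rewrite {2}[c y]ez ec add0r.
    by rewrite zc tc.
  have tzx : t (z x) = 0 := congr1 (fun F => F x) tz0.
  by rewrite {2}[x]ez endoD // tzx addr0.
have ee x : e (e x) = e x := efix e He ec x.
exists (fun t => inS M t /\ forall x, t (e x) = 0); split.
- split=> [t [] //||t1 t2 [H1 e1] [H2 e2]|t [Ht et]|t r [Ht et] Hr].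
  + by split; [exact: inS_zero | move=> x].
  + by split=> [|x]; [exact: inS_add | rewrite /= /addS /= e1 e2 addr0].
  + by split=> [|x]; [exact: inS_opp | rewrite /= /oppS /= et oppr0].
  + by split=> [|x]; [exact: inS_comp | rewrite /= et endo0].
- move=> t [Ht /funeq0P tc] [_ te]; apply/funeq0P => x.
  by rewrite -(efix t Ht tc x) te.
- move=> t Ht; exists (t \o e), (fun x => t x - t (e x)); split.
  + by split; [exact: inS_comp | apply/funeq0P => x /=; rewrite ec endo0].
  + by split=> [|x]; [exact: inS_sub Ht (inS_comp Ht He) | rewrite ee subrr].
  + by apply: functional_extensionality => x; rewrite /= /addS addrC subrK.
Qed.

Lemma lann_fully_invariantP c :
  fully_invariant (D:=modS_left M) (Ker (D:=modS_left M) (fun t => t \o c)) <->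
  forall t u, inS M t -> inS M u -> (forall x, t (c x) = 0) -> forall x, t (u (c x)) = 0.
Proof.
split=> [FI t u Ht Hu tc | IF h Hh t [Ht /funeq0P tc]].
  by have [_ /funeq0P] := FI _ (is_endo_rmul Hu) t (conj Ht (proj2 (funeq0P _) tc)).
have Hhid : inS M (h id) by case: Hh => hS _ _; apply: hS inS_id.
rewrite (modS_left_endoE Hh Ht); split; first exact: inS_comp.
by apply/funeq0P => x; exact: IF t (h id) Ht Hhid tc x.
Qed.

Lemma ssR_modS_leftP : strongly_self_Rickart (modS_left M) <->
  (forall c, inS M c -> exists e, lann_idempotent c e) /\ insertion_of_factors.
Proof.
split=> [H | [Hann IF] G HG].
  split=> [c Hc | a b u Ha Hb Hu].
    by apply/lann_summandP; case: (H _ (is_endo_rmul Hc)).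
  by have [_ /lann_fully_invariantP FI] := H _ (is_endo_rmul Hb); exact: FI a u Ha Hu.
have HGid : inS M (G id) by case: HG => GS _ _; apply: GS inS_id.
rewrite (modS_left_KerE HG); split; first exact/lann_summandP/(Hann _ HGid).
by apply/lann_fully_invariantP => t u Ht Hu; exact: IF _ _ _ Ht HGid Hu.
Qed.

Lemma insertion_of_factors_central e u : insertion_of_factors ->
  inS M e -> (forall x, e (e x) = e x) -> inS M u -> forall x, e (u x) = u (e x).
Proof.
move=> IF He ee Hu x.
pose k y := y - e y.
have Hk : inS M k := inS_sub inS_id He.
have ke y : k (e y) = 0 by rewrite /k ee subrr.
have ek y : e (k y) = 0 by rewrite /k endoB // ee subrr.
have /eqP := IF k e u Hk He Hu ke x; rewrite subr_eq0 => /eqP ueE.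
have /eqP := IF e k u He Hk Hu ek x; rewrite /k !endoB // subr_eq0 => /eqP euE.
by rewrite euE -ueE.
Qed.

Definition Ker_M_generated f :=
  forall x, f x = 0 -> exists t m, [/\ inS M t, forall y, f (t y) = 0 & t m = x].

Definition Coker_M_cogenerated f :=
  forall m, (forall h, inS M h -> (forall y, h (f y) = 0) -> h m = 0) -> exists y, m = f y.

Lemma coker_idempotent_lann f q : coker_idempotent f q -> lann_idempotent f q.
Proof.
move=> [Hq qq qf qker]; split=> // t Ht tf x.
have [y Ey] : exists y, x - q x = f y by apply: qker; rewrite endoB // qq subrr.
have : t (x - q x) = 0 by rewrite Ey tf.
by rewrite endoB // => /eqP; rewrite subr_eq0 => /eqP ->.
Qed.

Lemma ssR_modM_generatedP : strongly_self_Rickart (modM M) <->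
  strongly_self_Rickart (modS_right M) /\ forall f, inS M f -> Ker_M_generated f.
Proof.
rewrite ssR_modMP ssR_modS_rightP; split=> [H | [[Hann IF] gen] f Hf].
  split; [split=> [s Hs | a b u Ha _ Hu ab x] | move=> f Hf x fx].
  - have [[e [He se efix]] _] := H s Hs.
    by exists e; split=> // t _ st y; apply: efix.
  - by have [_ FI] := H a Ha; apply: FI.
  - have [[e [He fe efix]] _] := H f Hf.
    by exists e, x; split=> //; apply: efix.
have [e [He fe efix]] := Hann f Hf.
split=> [|h x Hh fx].
  by exists e; split=> // x /(gen f Hf) [t [m [Ht ft <-]]]; apply: efix.
have [t [m [Ht ft <-]]] := gen f Hf x fx.
exact: IF f t h Hf Ht Hh ft m.
Qed.

Lemma dssR_modM_cogeneratedP : dual_strongly_self_Rickart (modM M) <->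
  strongly_self_Rickart (modS_left M) /\ forall f, inS M f -> Coker_M_cogenerated f.
Proof.
rewrite dssR_modMP ssR_modS_leftP; split=> [H | [[Hann IF] cogen] f Hf].
  split; [split=> [c Hc | a b u _ Hb Hu ab x] | move=> f Hf m Hm].
  - by have [[q Hq] _] := H c Hc; exists q; apply: coker_idempotent_lann.
  - by have [_ FI] := H b Hb; have [y ->] := FI u x Hu.
  - by have [[q [Hq _ qf qker]] _] := H f Hf; apply/qker/Hm.
have [e [He ef efix]] := Hann f Hf.
split=> [|h y Hh].
  exists e; split=> // [x|x ex]; first exact: efix e He ef x.
  by apply: cogen => // h Hh hf; rewrite -(efix h Hh hf x) ex endo0.
by apply: cogen => // h' Hh' h'f; apply: IF h' f h Hh' Hf Hh h'f y.
Qed.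

Lemma ssR_modM_criterion (X : Prop) :
  (strongly_self_Rickart (modM M) -> X) ->
  (insertion_of_factors -> X ->
     forall f e, inS M f -> rann_idempotent f e -> Ker_M_generated f) ->
  strongly_self_Rickart (modM M) <-> strongly_self_Rickart (modS_right M) /\ X.
Proof.
move=> toX X_gen; split=> [H | [HS HX]].
  by split; [case: (proj1 ssR_modM_generatedP H) | exact: toX].
apply/ssR_modM_generatedP; split=> // f Hf.
have [Hann IF] := proj1 ssR_modS_rightP HS.
have [e He] := Hann f Hf.
exact: X_gen IF HX f e Hf He.
Qed.

Lemma dssR_modM_criterion (X : Prop) :
  (dual_strongly_self_Rickart (modM M) -> X) ->
  (insertion_of_factors -> X ->
     forall f e, inS M f -> lann_idempotent f e -> Coker_M_cogenerated f) ->
  dual_strongly_self_Rickart (modM M) <-> strongly_self_Rickart (modS_left M) /\ X.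
Proof.
move=> toX X_cogen; split=> [H | [HS HX]].
  by split; [case: (proj1 dssR_modM_cogeneratedP H) | exact: toX].
apply/dssR_modM_cogeneratedP; split=> // f Hf.
have [Hann IF] := proj1 ssR_modS_leftP HS.
have [e He] := Hann f Hf.
exact: X_cogen IF HX f e Hf He.
Qed.

Lemma ssR_Ker_M_cyclic : strongly_self_Rickart (modM M) ->
  forall f, inS M f -> Ker_M_cyclic M f.
Proof.
move=> /ssR_modMP H f Hf; have [[e [He fe efix]] _] := H f Hf.
by exists e; split=> // y; split=> [fy | [x <-]]; [exists y; apply: efix | apply: fe].
Qed.

Lemma Ker_M_cyclic_generated f : Ker_M_cyclic M f -> Ker_M_generated f.
Proof.
move=> [p [Hp pE]] x /pE [m pm]; exists p, m; split=> // y.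
by apply/pE; exists y.
Qed.

Lemma ssR_Ker_in_Stat : strongly_self_Rickart (modM M) ->
  forall f, inS M f -> Ker_in_Stat M f.
Proof.
move=> /ssR_modMP H f Hf T beta _ beta_add beta_bal.
have [[e [He fe efix]] _] := H f Hf.
have Ke : HomM_Ker f e by [].
exists (beta e); split=> [x y _ _ | g m [Hg fg] | psi _ psi_beta x fx].
- exact: beta_add.
- have eg : e \o g = g by apply: functional_extensionality => x; apply: efix.
  by rewrite -beta_bal // eg.
- by rewrite -{1}(efix x fx) psi_beta.
Qed.

Lemma Ker_in_Stat_generated f e : rann_idempotent f e -> Ker_in_Stat M f -> Ker_M_generated f.
Proof.
move=> [He fe efix] Stat x fx; exists e, x; split=> //.
have [phi [_ _ phi_uniq]] := Stat M (fun g m => g m) (fun _ _ _ _ _ => erefl)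
  (fun g m1 m2 Hg => endoD m1 m2 (proj1 Hg)) (fun _ _ _ _ _ => erefl).
have phi_e : e x = phi x.
  by apply: phi_uniq fx => [y z _ _ | g m [Hg fg]]; [apply: endoD | apply: efix].
have phi_id : x = phi x by apply: (phi_uniq id).
by rewrite phi_e -phi_id.
Qed.

Lemma ssR_ker_locally_split : strongly_self_Rickart (modM M) ->
  forall f, inS M f -> ker_locally_split M f.
Proof.
move=> /ssR_modMP H f Hf a fa; have [[e [He fe efix]] _] := H f Hf.
by exists e; split; [split | apply: efix].
Qed.

Lemma ker_locally_split_generated f : ker_locally_split M f -> Ker_M_generated f.
Proof. by move=> f_split x fx; have [h [[Hh fh] hx]] := f_split x fx; exists h, x. Qed.

Lemma ssR_k_quasi_retractable : strongly_self_Rickart (modM M) -> k_quasi_retractable M.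
Proof.
move=> /ssR_modMP H f Hf [x [fx x_neq0]]; have [[e [He fe efix]] _] := H f Hf.
by exists e; split; [split | exists x; rewrite efix].
Qed.

Lemma k_quasi_retractable_generated : insertion_of_factors -> k_quasi_retractable M ->
  forall f e, inS M f -> rann_idempotent f e -> Ker_M_generated f.
Proof.
move=> IF kqr f e Hf [He fe efix] x fx; exists e, x; split=> //.
have ee y : e (e y) = e y := efix e He fe y.
have central := insertion_of_factors_central IF He ee.
apply: NNPP => ex_neq.
pose g y := f y + e y.
have g_ker : g (x - e x) = 0.
  by rewrite /g (endoB _ _ Hf) (endoB _ _ He) fx fe ee !subrr addr0.
have kx_neq0 : x - e x <> 0.
  by move/eqP; rewrite subr_eq0 => /eqP xe; apply: ex_neq.
have [h [[Hh gh] [y hy]]] := kqr g (inS_add Hf He) (ex_intro _ _ (conj g_ker kx_neq0)).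
have eh z : e (h z) = 0.
  have := congr1 e (gh z).
  by rewrite /g (endoD _ _ He) (endo0 He) (central f Hf) fe ee add0r.
have fh z : f (h z) = 0 by have := gh z; rewrite /g eh addr0.
by apply: hy; rewrite -(efix h Hh fh y) eh.
Qed.

Lemma dssR_Coker_M_cocyclic : dual_strongly_self_Rickart (modM M) ->
  forall f, inS M f -> Coker_M_cocyclic M f.
Proof.
by move=> /dssR_modMP H f Hf; have [[q [Hq _ qf qker]] _] := H f Hf; exists q.
Qed.

Lemma Coker_M_cocyclic_cogenerated f : Coker_M_cocyclic M f -> Coker_M_cogenerated f.
Proof. by move=> [q [Hq qf qker]] m Hm; apply/qker/Hm. Qed.

Lemma dssR_Coker_in_Refl : dual_strongly_self_Rickart (modM M) ->
  forall f, inS M f -> Coker_in_Refl M f.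
Proof.
move=> /dssR_modMP H f Hf; have [[q qE] _] := H f Hf.
have [Hq _ qf qker] := qE; have [_ _ qfix] := coker_idempotent_lann qE.
split=> [m Hm | phi _ phi_lin]; first exact/qker/Hm.
exists (phi q) => h [Hh hf].
have hq : h \o q = h by apply: functional_extensionality => x; apply: qfix.
by rewrite -{1}hq; apply: phi_lin.
Qed.

Lemma Coker_in_Refl_cogenerated f : Coker_in_Refl M f -> Coker_M_cogenerated f.
Proof. by move=> [inj _] m Hm; apply: inj => h [Hh hf]; apply: Hm. Qed.

Lemma dssR_coker_locally_split : dual_strongly_self_Rickart (modM M) ->
  forall f, inS M f -> coker_locally_split M f.
Proof.
move=> /dssR_modMP H f Hf m; have [[q [Hq qq qf qker]] _] := H f Hf.
by exists q; split; [split | apply: qker; rewrite endoB // qq subrr].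
Qed.

Lemma coker_locally_split_cogenerated f :
  inS M f -> coker_locally_split M f -> Coker_M_cogenerated f.
Proof.
move=> Hf f_split m Hm; have [h [[Hh hf] [y hm]]] := f_split m.
by exists (- y); rewrite endoN // -hm (Hm h Hh hf) sub0r opprK.
Qed.

Lemma dssR_c_quasi_coretractable : dual_strongly_self_Rickart (modM M) ->
  c_quasi_coretractable M.
Proof.
move=> /dssR_modMP H f Hf [x Hx]; have [[q [Hq _ qf qker]] _] := H f Hf.
exists q; split; first by split.
by exists x => /qker [y Ey]; apply: (Hx y); rewrite Ey.
Qed.

Lemma c_quasi_coretractable_cogenerated : insertion_of_factors -> c_quasi_coretractable M ->
  forall f e, inS M f -> lann_idempotent f e -> Coker_M_cogenerated f.
Proof.
move=> IF cqc f e Hf [He ef efix] m Hm.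
have ee x : e (e x) = e x := efix e He ef x.
have central := insertion_of_factors_central IF He ee.
have em : e m = 0 := Hm e He ef.
apply: NNPP => m_notin.
pose g y := f y + e y.
have g_neq y : g y <> m.
  move=> gy; apply: m_notin; exists y.
  have ey : e y = 0.
    by have := congr1 e gy; rewrite /g (endoD _ _ He) ef ee add0r em.
  by rewrite -gy /g ey addr0.
have [h [[Hh hg] [x hx]]] := cqc g (inS_add Hf He) (ex_intro _ m g_neq).
have he z : h (e z) = 0.
  by have := hg (e z); rewrite /g -(central f Hf z) ef ee add0r.
have hf y : h (f y) = 0.
  by have := hg y; rewrite /g (endoD _ _ Hh) he addr0.
by apply: hx; rewrite -(efix h Hh hf x) he.
Qed.

End EndomorphismRing.

Theorem theorem4p12 (R : pzRingType) (M : lmodType R^c) :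
  [<-> strongly_self_Rickart (modM M);
       strongly_self_Rickart (modS_right M) /\
         (forall f, inS M f -> Ker_M_cyclic M f);
       strongly_self_Rickart (modS_right M) /\
         (forall f, inS M f -> Ker_in_Stat M f);
       strongly_self_Rickart (modS_right M) /\
         (forall f, inS M f -> ker_locally_split M f);
       strongly_self_Rickart (modS_right M) /\ k_quasi_retractable M]
  /\
  [<-> dual_strongly_self_Rickart (modM M);
       strongly_self_Rickart (modS_left M) /\
         (forall f, inS M f -> Coker_M_cocyclic M f);
       strongly_self_Rickart (modS_left M) /\
         (forall f, inS M f -> Coker_in_Refl M f);
       strongly_self_Rickart (modS_left M) /\
         (forall f, inS M f -> coker_locally_split M f);
       strongly_self_Rickart (modS_left M) /\ c_quasi_coretractable M].
Proof.
have cyclic := ssR_modM_criterion (@ssR_Ker_M_cyclic R M)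
  (fun _ H f _ Hf _ => Ker_M_cyclic_generated (H f Hf)).
have stat := ssR_modM_criterion (@ssR_Ker_in_Stat R M)
  (fun _ H f _ Hf He => Ker_in_Stat_generated He (H f Hf)).
have ker_split := ssR_modM_criterion (@ssR_ker_locally_split R M)
  (fun _ H f _ Hf _ => ker_locally_split_generated (H f Hf)).
have kqr := ssR_modM_criterion (@ssR_k_quasi_retractable R M)
  (@k_quasi_retractable_generated R M).
have cocyclic := dssR_modM_criterion (@dssR_Coker_M_cocyclic R M)
  (fun _ H f _ Hf _ => Coker_M_cocyclic_cogenerated (H f Hf)).
have refl := dssR_modM_criterion (@dssR_Coker_in_Refl R M)
  (fun _ H f _ Hf _ => Coker_in_Refl_cogenerated (H f Hf)).
have coker_split := dssR_modM_criterion (@dssR_coker_locally_split R M)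
  (fun _ H f _ Hf _ => coker_locally_split_cogenerated Hf (H f Hf)).
have cqc := dssR_modM_criterion (@dssR_c_quasi_coretractable R M)
  (@c_quasi_coretractable_cogenerated R M).
split; tfae.
- by move/cyclic.
- by move/cyclic/stat.
- by move/stat/ker_split.
- by move/ker_split/kqr.
- by move/kqr.
- by move/cocyclic.
- by move/cocyclic/refl.
- by move/refl/coker_split.
- by move/coker_split/cqc.
- by move/cqc.
Qed.
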